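(* Let $X$ be an infinite-dimensional real normed linear space with zero $\theta$ whose norm is strictly convex. Then for every $m\in\mathbb{N}$ and every $E$ with $B(\theta,1)\subseteq E\subseteq\overline{B}(\theta,1)$ and $E=\bigcup_{i=1}^m A_i$, where $A_i\cong A_j$ for all $i,j$, either $\theta\in\bigcap_{i=1}^m\mathrm{Int}\,A_i$ or $\theta\notin\bigcup_{i=1}^m\mathrm{Int}\,A_i$.
   Context: $B(\theta,1)=\{x:\|x\|<1\}$, $\overline{B}(\theta,1)=\{x:\|x\|\leqslant1\}$. The norm is strictly convex if for all $x\ne y$ with $\|x\|=\|y\|=1$ and $\lambda\in(0,1)$, $\|\lambda x+(1-\lambda)y\|<1$. Sets $A,B\subseteq X$ are congruent, $A\cong B$, if there is a surjective isometry $f\colon X\to X$ with $f(A)=B$. $\mathrm{Int}\,A$ is the set of $x\in A$ such that some open ball $B(x,\varepsilon)\subseteq A$. *)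

From HB Require Import structures.
From mathcomp Require Import all_boot all_order all_algebra.
From mathcomp Require Import all_classical all_reals all_analysis.
Set Implicit Arguments. Unset Strict Implicit. Unset Printing Implicit Defensive.
Import Order.TTheory GRing.Theory Num.Theory.
Import numFieldNormedType.Exports.
Local Open Scope classical_set_scope.
Local Open Scope ring_scope.

Definition open_unit_ball {R : realType} {X : normedModType R} : set X :=
  [set x | `|x| < 1].
Definition closed_unit_ball {R : realType} {X : normedModType R} : set X :=
  [set x | `|x| <= 1].

Definition lin_indep {R : realType} {X : normedModType R} (n : nat)
  (v : 'I_n -> X) : Prop :=
  forall c : 'I_n -> R, \sum_(i < n) c i *: v i = 0 -> forall i, c i = 0.

Definition infinite_dimensional {R : realType} (X : normedModType R) : Prop :=
  forall n : nat, exists v : 'I_n -> X, lin_indep v.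

Definition strictly_convex_norm {R : realType} (X : normedModType R) : Prop :=
  forall (x y : X) (l : R), x != y -> `|x| = 1 -> `|y| = 1 -> 0 < l < 1 ->
    `|l *: x + (1 - l) *: y| < 1.

Definition isometry {R : realType} {X : normedModType R} (f : X -> X) : Prop :=
  forall x y, `|f x - f y| = `|x - y|.

Definition congruent {R : realType} {X : normedModType R} (A B : set X) : Prop :=
  exists f : X -> X, isometry f /\ (forall y, exists x, f x = y) /\ f @` A = B.

Definition Int {R : realType} {X : normedModType R} (A : set X) : set X :=
  [set x | A x /\ exists e : R, 0 < e /\ [set y | `|y - x| < e] `<=` A].

From HB Require Import structures.
From mathcomp Require Import all_boot all_order all_algebra.
From mathcomp Require Import all_classical all_reals all_analysis.
From mathcomp Require Import lra ring.
Set Implicit Arguments. Unset Strict Implicit. Unset Printing Implicit Defensive.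
Import Order.TTheory GRing.Theory Num.Theory.
Import numFieldNormedType.Exports.
Local Open Scope classical_set_scope.
Local Open Scope ring_scope.

(** If 0 is interior to A_k, pick for each j an isometry g with g(A_j) = A_k and
    a preimage q of 0.  If q = 0 then g fixes 0 and 0 is interior to A_j too.
    Otherwise r := g 0 is nonzero and A_k lies in the "lens" |x| <= 1,
    |x - r| <= 1, so every A_i, an isometric copy of A_k, lies in a lens
    |x - a_i| <= 1, |x - b_i| <= 1 with a_i <> b_i.  Since X is
    infinite-dimensional and best approximations from finite-dimensional
    subspaces exist, some unit vector u is at distance >= 1 from every midpoint
    (a_i + b_i)/2; by strict convexity u is then at distance > 1 from a_i or
    from b_i, and shrinking u slightly gives a point of B(0,1) outside all the
    lenses, although B(0,1) is covered by the A_i. *)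

Section LinearCombination.
Variables (R : pzRingType) (V : lmodType R).

Definition lincomb n (y : 'I_n -> V) (c : 'I_n -> R) : V := \sum_(j < n) c j *: y j.

Lemma lincomb0 n (y : 'I_n -> V) : lincomb y (fun=> 0) = 0.
Proof. by rewrite /lincomb big1 // => j _; rewrite scale0r. Qed.

Lemma lincombDZ n (y : 'I_n -> V) a b t :
  lincomb y (fun j => a j + t * b j) = lincomb y a + t *: lincomb y b.
Proof.
rewrite /lincomb scaler_sumr -big_split; apply: eq_bigr => j _.
by rewrite scalerDl scalerA.
Qed.

Lemma lincombZ n (y : 'I_n -> V) a t :
  lincomb y (fun j => t * a j) = t *: lincomb y a.
Proof.
by rewrite -[RHS]add0r -(lincomb0 y) -lincombDZ; apply: eq_bigr => j _; rewrite add0r.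
Qed.

Lemma lincomb_delta n (y : 'I_n -> V) i : lincomb y (fun j => (j == i)%:R) = y i.
Proof.
rewrite /lincomb (bigD1 i) //= eqxx scale1r big1 ?addr0 // => j /negbTE ->.
by rewrite scale0r.
Qed.

Lemma lincomb_recl n (y : 'I_n.+1 -> V) c :
  lincomb y c = c ord0 *: y ord0 + lincomb (y \o lift ord0) (c \o lift ord0).
Proof. exact: big_ord_recl. Qed.

Definition cons_coef n (t : R) (c : 'I_n -> R) : 'I_n.+1 -> R :=
  fun j => if unlift ord0 j is Some k then c k else t.

Lemma lincomb_cons n (y : 'I_n.+1 -> V) t c :
  lincomb y (cons_coef t c) = t *: y ord0 + lincomb (y \o lift ord0) c.
Proof.
rewrite lincomb_recl /cons_coef unlift_none; congr (_ + _).
by apply: eq_bigr => j _ /=; rewrite liftK.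
Qed.

End LinearCombination.

Lemma lipschitz_continuous (R : realFieldType) (V W : normedModType R)
    (f : V -> W) (k : R) :
  (forall x y, `|f x - f y| <= k * `|x - y|) -> continuous f.
Proof.
move=> f_lip x; apply/cvgrPdist_lt => e e0.
have k1 : 0 < `|k| + 1 by rewrite ltr_wpDl.
near=> y; apply: le_lt_trans (f_lip x y) _.
apply: (le_lt_trans (y := (`|k| + 1) * `|x - y|)).
  by apply: ler_wpM2r => //; rewrite (le_trans (ler_norm k)) // lerDl.
rewrite -ltr_pdivlMl // mulrC; near: y.
apply/nbhs_normP; exists (e / (`|k| + 1)) => /=; first by rewrite divr_gt0.
by move=> y; rewrite /ball_ /= distrC.
Unshelve. all: by end_near.
Qed.

Lemma continuous_coercive_min (R : realType) (F : R -> R) (d K : R) :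
  continuous F -> 0 < d -> (forall t, `|t| * d - K <= F t) ->
  exists t0, forall t, F t0 <= F t.
Proof.
move=> F_cont d_gt0 F_coer.
pose M := (K + F 0) / d.
have M_ge0 : 0 <= M.
  apply: divr_ge0; last exact: ltW.
  by have := F_coer 0; rewrite normr0 mul0r; lra.
have [||t0 _ t0_min] := @EVT_min R F (- M) M.
- by lra.
- exact: continuous_subspaceT.
exists t0 => t; have [tM|] := boolP (t \in `[- M, M]); first exact: t0_min.
rewrite in_itv /= -ler_norml -ltNge => Mt.
apply: le_trans (t0_min 0 _) _; first by rewrite in_itv /= oppr_le0 M_ge0.
have : M * d < `|t| * d by rewrite ltr_pM2r.
rewrite /M mulfVK ?gt_eqF //; have := F_coer t; lra.
Qed.

Section BestApproximation.
Variables (R : realType) (X : normedModType R).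

Definition best_approx n (y : 'I_n -> X) (z : X) (c : 'I_n -> R) :=
  forall c', `|z - lincomb y c| <= `|z - lincomb y c'|.

Section BestApproxStep.
Variables (n : nat) (y : 'I_n.+1 -> X).
Let y0 := y ord0.
Let y' := y \o lift ord0.
Hypothesis approx_tail : forall w, exists c, best_approx y' w c.

Lemma best_approx_spanned c0 z : y0 = lincomb y' c0 -> exists c, best_approx y z c.
Proof.
move=> y0E; have [c c_best] := approx_tail z.
exists (cons_coef 0 c) => c'.
rewrite lincomb_cons scale0r add0r lincomb_recl -/y0 -/y' y0E.
rewrite [c' ord0 *: _ + _]addrC -lincombDZ.
exact: c_best.
Qed.

Lemma best_approx_unspanned z :
  (forall c0, y0 != lincomb y' c0) -> exists c, best_approx y z c.
Proof.
move=> y0_out; have [c0 c0_best] := approx_tail y0.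
pose d := `|y0 - lincomb y' c0|.
have d_gt0 : 0 < d by rewrite normr_gt0 subr_eq0.
have norm_lower t a : `|t| * d <= `|t *: y0 + lincomb y' a|.
  have [->|t_neq0] := eqVneq t 0; first by rewrite normr0 mul0r.
  have -> : t *: y0 + lincomb y' a = t *: (y0 - lincomb y' (fun j => - t^-1 * a j)).
    by rewrite lincombZ scalerBr scalerA mulrN mulfV // scaleN1r opprK.
  by rewrite normrZ; apply: ler_wpM2l => //; exact: c0_best.
have /choice [G G_best] : forall t, exists c, best_approx y' (z - t *: y0) c.
  by move=> t; exact: approx_tail.
(* F t is the distance from z - t y0 to the span of y'; it is |y0|-Lipschitz,
   and coercive because y0 lies at distance d > 0 from that span. *)
pose F t := `|z - t *: y0 - lincomb y' (G t)|.
have F_lip s t : F t <= F s + `|y0| * `|s - t|.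
  apply: le_trans (G_best t (G s)) _.
  have -> : z - t *: y0 - lincomb y' (G s)
            = (z - s *: y0 - lincomb y' (G s)) + (s - t) *: y0.
    by rewrite scalerBl [RHS]addrAC subrKA.
  by rewrite (le_trans (ler_normD _ _)) // normrZ mulrC.
have F_cont : continuous F.
  apply: (@lipschitz_continuous _ _ _ F `|y0|) => s t; rewrite ler_norml.
  have := F_lip s t; have := F_lip t s; rewrite [`|t - s|]distrC => ? ?.
  by apply/andP; split; lra.
have F_coer t : `|t| * d - `|z| <= F t.
  rewrite lerBlDr (le_trans (norm_lower t (G t))) //.
  have -> : t *: y0 + lincomb y' (G t) = z - (z - t *: y0 - lincomb y' (G t)).
    by rewrite -addrA -opprD subKr.
  by rewrite (le_trans (ler_normB _ _)) // addrC.
have [t0 t0_min] := continuous_coercive_min F_cont d_gt0 F_coer.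
exists (cons_coef t0 (G t0)) => c'.
rewrite lincomb_cons lincomb_recl !opprD !addrA.
exact: le_trans (t0_min (c' ord0)) (G_best _ _).
Qed.

End BestApproxStep.

Lemma exists_best_approx n (y : 'I_n -> X) z : exists c, best_approx y z c.
Proof.
elim: n y z => [|n IH] y z.
  by exists (fun=> 0) => c'; rewrite /lincomb !big_ord0.
have [[c0 /eqP y0E]|y0_out] :=
  pselect (exists c0, y ord0 == lincomb (y \o lift ord0) c0).
  exact: best_approx_spanned y0E.
by apply: best_approx_unspanned => // c0; apply/negP => y0E; apply: y0_out; exists c0.
Qed.

Lemma lincomb_family_not_lin_indep n (y : 'I_n -> X) (v : 'I_n.+1 -> X)
    (C : 'I_n.+1 -> 'I_n -> R) :
  (forall k, v k = lincomb y (C k)) -> ~ lin_indep v.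
Proof.
move=> vE v_indep.
pose M : 'M[R]_(n.+1, n) := \matrix_(k, j) C k j.
pose w := nz_row (kermx M).
have w_neq0 : w != 0.
  rewrite nz_row_eq0 kermx_eq0 /row_free neq_ltn.
  by rewrite (leq_ltn_trans (rank_leq_col M)).
have wM : w *m M = 0 by apply/sub_kermxP; exact: nz_row_sub.
have w_comb : \sum_(k < n.+1) w 0 k *: v k = 0.
  under eq_bigr => k _ do rewrite vE /lincomb scaler_sumr.
  rewrite exchange_big /=; apply: big1 => j _.
  under eq_bigr => k _ do rewrite scalerA.
  rewrite -scaler_suml.
  have -> : \sum_(k < n.+1) w 0 k * C k j = (w *m M) 0 j.
    by rewrite mxE; apply: eq_bigr => k _; rewrite mxE.
  by rewrite wM mxE scale0r.
move/negP: w_neq0; apply; apply/eqP/rowP => k.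
by rewrite (v_indep _ w_comb k) mxE.
Qed.

Lemma exists_not_spanned : infinite_dimensional X ->
  forall n (y : 'I_n -> X), exists z, forall c, z != lincomb y c.
Proof.
move=> X_inf n y; have [v v_indep] := X_inf n.+1.
apply: contrapT => all_spanned.
have /choice [C vE] : forall k, exists c, v k = lincomb y c.
  move=> k; apply: contrapT => v_out; apply: all_spanned; exists (v k) => c.
  by apply/eqP => vkE; apply: v_out; exists c.
exact: lincomb_family_not_lin_indep vE v_indep.
Qed.

Lemma exists_unit_far_from_points : infinite_dimensional X ->
  forall n (y : 'I_n -> X), exists u, `|u| = 1 /\ forall i, 1 <= `|u - y i|.
Proof.
move=> X_inf n y; have [z z_out] := exists_not_spanned X_inf y.
have [c c_best] := exists_best_approx y z.
pose d := `|z - lincomb y c|.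
have d_gt0 : 0 < d by rewrite normr_gt0 subr_eq0.
exists (d^-1 *: (z - lincomb y c)); split.
  by rewrite normrZ ger0_norm ?invr_ge0 ?(ltW d_gt0) // mulVf ?gt_eqF.
move=> i.
(* u - y i is d^-1 (z - w) for another combination w of y, and d is the least
   distance from z to such combinations. *)
have -> : d^-1 *: (z - lincomb y c) - y i
          = d^-1 *: (z - lincomb y (fun j => c j + d * (j == i)%:R)).
  rewrite lincombDZ lincomb_delta opprD addrA [RHS]scalerBr scalerA.
  by rewrite mulVf ?gt_eqF // scale1r.
rewrite normrZ ger0_norm ?invr_ge0 ?(ltW d_gt0) // -[leLHS](mulVf (lt0r_neq0 d_gt0)).
apply: ler_wpM2l; [by rewrite invr_ge0 ltW | exact: c_best].
Qed.

End BestApproximation.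

Lemma open_ball_point_far_from (R : realFieldType) (X : normedModType R) m
    (p : 'I_m -> X) u :
  `|u| <= 1 -> (forall i, 1 < `|u - p i|) ->
  exists x, `|x| < 1 /\ forall i, 1 < `|x - p i|.
Proof.
move=> u_le1 u_far.
pose eps := \big[Num.min/1]_(i < m) (`|u - p i| - 1).
have eps_gt0 : 0 < eps by apply: lt_bigmin => // i _; rewrite subr_gt0.
have eps_le1 : eps <= 1 by exact: bigmin_le_id.
have u_ge0 := normr_ge0 u.
exists ((1 - eps / 2) *: u); split.
  by rewrite normrZ ger0_norm; nra.
move=> i; have : eps <= `|u - p i| - 1 by exact: bigmin_le.
have : `|u - p i| <= `|u - (1 - eps / 2) *: u| + `|(1 - eps / 2) *: u - p i|.
  by rewrite -[u - p i](subrKA ((1 - eps / 2) *: u)) ler_normD.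
by rewrite scalerBl scale1r subKr normrZ ger0_norm; nra.
Qed.

Section Isometry.
Variables (R : realType) (X : normedModType R).

Lemma isometry_inj (f : X -> X) : isometry f -> injective f.
Proof.
move=> f_iso x y fxy; apply/eqP; rewrite -subr_eq0 -normr_eq0 -f_iso fxy.
by rewrite subrr normr0.
Qed.

Lemma isometry_Int (f : X -> X) (A : set X) x :
  isometry f -> Int (f @` A) (f x) -> Int A x.
Proof.
move=> f_iso [[x' Ax' /(isometry_inj f_iso) <-] [e [e_gt0 ball_sub]]].
split=> //; exists e; split=> // y /= yx_lt.
have [y' Ay' /(isometry_inj f_iso) <-] : (f @` A) (f y).
  by apply: ball_sub; rewrite /= f_iso.
exact: Ay'.
Qed.

End Isometry.

Section StrictlyConvex.
Variables (R : realType) (X : normedModType R).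
Hypothesis X_sc : strictly_convex_norm X.

Lemma strictly_convex_midpoint (v w : X) :
  `|v| <= 1 -> `|w| <= 1 -> v != w -> `|2^-1 *: (v + w)| < 1.
Proof.
move=> v_le1 w_le1 vw; have vw_le := ler_normD v w.
rewrite normrZ ger0_norm ?invr_ge0 ?ler0n //.
have [v_lt1|v_ge1] := ltrP `|v| 1; first by lra.
have [w_lt1|w_ge1] := ltrP `|w| 1; first by lra.
have v1 : `|v| = 1 by apply/eqP; rewrite eq_le v_le1 v_ge1.
have w1 : `|w| = 1 by apply/eqP; rewrite eq_le w_le1 w_ge1.
have := X_sc (l := 2^-1) vw v1 w1.
have -> : (1 - 2^-1 : R) = 2^-1 by field.
rewrite -scalerDr normrZ ger0_norm ?invr_ge0 ?ler0n //.
by apply; apply/andP; split; lra.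
Qed.

Lemma exists_unit_far_from_pairs : infinite_dimensional X ->
  forall m (a b : 'I_m -> X), (forall i, a i != b i) ->
  exists u, `|u| = 1 /\ forall i, 1 < `|u - a i| \/ 1 < `|u - b i|.
Proof.
move=> X_inf m a b ab_neq.
have [u [u1 u_far]] :=
  exists_unit_far_from_points X_inf (fun i => 2^-1 *: (a i + b i)).
exists u; split=> // i.
have [|ua_le1] := ltrP 1 `|u - a i|; first by left.
right; rewrite ltNge; apply/negP => ub_le1.
have uab_neq : u - a i != u - b i by rewrite (inj_eq (addrI u)) (inj_eq oppr_inj).
have := strictly_convex_midpoint ua_le1 ub_le1 uab_neq.
have -> : 2^-1 *: (u - a i + (u - b i)) = u - 2^-1 *: (a i + b i).
  have half_half : (2^-1 + 2^-1 : R) = 1 by field.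
  by rewrite addrACA -opprD scalerBr scalerDr -scalerDl half_half scale1r.
by rewrite ltNge u_far.
Qed.

Lemma exists_open_ball_point_far_from_pairs : infinite_dimensional X ->
  forall m (a b : 'I_m -> X), (forall i, a i != b i) ->
  exists x, `|x| < 1 /\ forall i, 1 < `|x - a i| \/ 1 < `|x - b i|.
Proof.
move=> X_inf m a b ab_neq.
have [u [u1 u_far]] := exists_unit_far_from_pairs X_inf ab_neq.
pose p i := if 1 < `|u - a i| then a i else b i.
have [|i|x [x_lt1 x_far]] := @open_ball_point_far_from _ _ m p u.
- by rewrite u1.
- by rewrite /p; case: ifP => // /negbT; case: (u_far i) => // ->.
exists x; split=> // i; have := x_far i.
by rewrite /p; case: ifP => _ ?; [left | right].
Qed.

Lemma open_ball_not_covered_by_lens_copies : infinite_dimensional X ->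
  forall m (C : set X) (r : X) (A : 'I_m -> set X), r != 0 ->
  (forall x, C x -> `|x| <= 1 /\ `|x - r| <= 1) ->
  (forall i, exists h, isometry h /\ h @` C = A i) ->
  ~ open_unit_ball `<=` \bigcup_(i in [set: 'I_m]) A i.
Proof.
move=> X_inf m C r A r_neq0 C_lens /choice [h h_iso] ball_sub.
have h_neq i : h i 0 != h i r.
  by rewrite (inj_eq (isometry_inj (h_iso i).1)) eq_sym.
have [x [x_lt1 x_far]] := exists_open_ball_point_far_from_pairs X_inf h_neq.
have [i _] := ball_sub x x_lt1.
rewrite -(h_iso i).2 => -[c /C_lens [c_le1 cr_le1] hcx].
by case: (x_far i); rewrite -hcx (h_iso i).1 ?subr0 ltNge ?c_le1 ?cr_le1.
Qed.

End StrictlyConvex.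

Theorem mainTheorem11 (R : realType) (X : normedModType R)
  (hinf : infinite_dimensional X) (hsc : strictly_convex_norm X)
  (m : nat) (E : set X) (A : 'I_m -> set X) :
  open_unit_ball `<=` E -> E `<=` closed_unit_ball ->
  E = \bigcup_(i in [set: 'I_m]) A i ->
  (forall i j, congruent (A i) (A j)) ->
  (\bigcap_(i in [set: 'I_m]) Int (A i)) 0 \/
  ~ (\bigcup_(i in [set: 'I_m]) Int (A i)) 0.
Proof.
move=> ball_E E_ball EA A_cong.
have [[k _ Ak_Int0]|] := pselect ((\bigcup_(i in [set: 'I_m]) Int (A i)) 0);
  last by right.
left=> j _; have [g [g_iso [_ gAj]]] := A_cong j k.
have [q _ gq0] : (g @` A j) 0 by rewrite gAj; exact: Ak_Int0.1.
have [q0|q_neq0] := eqVneq q 0.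
  by apply: (isometry_Int g_iso); rewrite gAj -q0 gq0.
have A_E i : A i `<=` E by rewrite EA => x Aix; exists i.
exfalso; apply: (open_ball_not_covered_by_lens_copies hsc hinf (C := A k) (r := g 0) (A := A)).
- have := g_iso 0 q; rewrite gq0 subr0 sub0r normrN => g0_norm.
  by rewrite -normr_eq0 g0_norm normr_eq0.
- move=> x Akx; split; first exact: E_ball (A_E k x Akx).
  move: Akx; rewrite -gAj => -[x' Ajx' <-].
  by rewrite g_iso subr0; exact: E_ball (A_E j x' Ajx').
- by move=> i; have [h [h_iso [_ hAk]]] := A_cong k i; exists h.
- by rewrite -EA.
Qed.
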